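(* There exist constants $C_1,C_2>0$ such that for all $(\lambda,\zeta)\in\mathbb{S}\times(\mathbb{Z}^2\setminus\{0\})$, $$\frac{C_1}{\langle\omega\rangle^2}\le\Big|\int_0^a(\omega^2-\nu\partial_{zz})^{-1}(1)\,dz\Big|\le\frac{C_2}{\langle\omega\rangle^2},$$ where $(\omega^2-\nu\partial_{zz})^{-1}(1)$ denotes the solution $g$ on $(0,a)$ of $\omega^2g-\nu g''=1$, $g(0)=g(a)=0$.
   Context: Fix $a>0$, $\nu>0$, $\alpha\in\mathbb{R}$, $\beta,\gamma>0$, $\Omega=\mathbb{T}^2\times(0,a)$, $\mathbb{T}^2=(\mathbb{R}/2\pi\mathbb{Z})^2$. Let $\mathcal{V}=\mathcal{V}_1\times\mathcal{V}_2$, where $\mathcal{V}_1$ is the closure in $H^1(\Omega)^2$ of smooth $(u,v)$ periodic in $x,y$, vanishing at $z=0,a$, with $\int_0^a(\partial_xu+\partial_yv)dz=0$, and $\mathcal{V}_2$ the closure in $H^1(\Omega)$ of smooth $\theta$ periodic in $x,y$ vanishing at $z=0,a$. For $X=(u,v,\theta),X'=(u',v',\theta')\in\mathcal{V}$ put $(X,X')_{\mathcal{H}}=\int_\Omega(u\bar u'+v\bar v'+\frac\beta\gamma\theta\bar\theta')$, $(X,X')_{\mathcal{V}}=\int_\Omega(\nabla u\cdot\nabla\bar u'+\nabla v\cdot\nabla\bar v'+\frac\beta\gamma\nabla\theta\cdot\nabla\bar\theta')$, $w=-\int_0^z(\partial_xu+\partial_yv)$, $w'=-\int_0^z(\partial_xu'+\partial_yv')$,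 $B(X,X')=-\int_\Omega\theta\bar w'+\int_\Omega w\bar\theta'$, $C(X,X')=-\int_\Omega v\bar u'+\int_\Omega u\bar v'$, $\langle PX,X'\rangle=\nu(X,X')_{\mathcal{V}}+\beta B(X,X')+\alpha C(X,X')$, and $\mathbb{V}_P=\{\lambda\in\mathbb{C}:\exists X\in\mathcal{V}\setminus\{0\},\ \lambda(X,X')_{\mathcal{H}}+\langle PX,X'\rangle=0\ \forall X'\in\mathcal{V}\}$. Let $\mathbb{S}=\{-\delta_2-\mu_1+i\mu_2:(\mu_1,\mu_2)\in\mathbb{R}^2,\ |\mu_2|\ge\mu_1/\delta_1\}$, where $\delta_1>0$ is small enough that $\mathbb{S}\cap\mathbb{V}_P=\emptyset$ and $\delta_2<\min(\frac{\nu\pi^2}{2a^2},\frac\nu2)$. For $\lambda\in\mathbb{S}$, $\zeta\in\mathbb{Z}^2$: $\omega^2=\lambda+\nu|\zeta|^2$, $\langle\zeta\rangle=1+|\zeta|$, $\langle\omega\rangle^2=|\lambda|+\langle\zeta\rangle^2$. *)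

From Stdlib Require Import Reals.
From Coquelicot Require Import Coquelicot.
Open Scope R_scope.

Definition in_S (d1 d2 : R) (lam : C) : Prop :=
  exists mu1 mu2 : R, lam = ((- d2 - mu1)%R, mu2) /\ Rabs mu2 >= mu1 / d1.

Definition zeta_sq (z1 z2 : Z) : R := (IZR z1) ^ 2 + (IZR z2) ^ 2.

Definition jzeta (z1 z2 : Z) : R := 1 + sqrt (zeta_sq z1 z2).

Definition omega2 (nu : R) (lam : C) (z1 z2 : Z) : C :=
  (lam + RtoC (nu * zeta_sq z1 z2))%C.

Definition jomega2 (lam : C) (z1 z2 : Z) : R :=
  Cmod lam + (jzeta z1 z2) ^ 2.

Definition dirichlet_sol (a nu : R) (w2 : C) (g : R -> C) : Prop :=
  (forall z, 0 <= z <= a -> continuous g z) /\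
  g 0 = RtoC 0 /\ g a = RtoC 0 /\
  exists g1 g2 : R -> C,
    forall z, 0 < z < a ->
      is_derive g z (g1 z) /\ is_derive g1 z (g2 z) /\
      (w2 * g z - RtoC nu * g2 z)%C = RtoC 1.

Definition cint (a : R) (g : R -> C) : C :=
  @RInt C_R_CompleteNormedModule g 0 a.

From Stdlib Require Import Reals Lra Lia.
From Coquelicot Require Import Coquelicot.
Open Scope R_scope.

(* Write [w = omega^2 = p + i q] and [g = u + i v].  Multiplying [w g - nu g'' = 1] by the
   conjugate of [g] and integrating by parts gives
     [p |g|^2 + nu |g'|^2 = int u]   and   [- q |g|^2 = int v],
   and on [S] the point [w] stays in a sector [Re w >= - d1 |Im w|], so
   [(|p| + |q|) |g|^2 <= (1 + d1) |int g|].  Combined with [|int g| <= t |g|^2 + a/(2t)]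
   this gives the upper bound [|int g| <= C / |w|].  Testing the real part of the equation
   against the weight [x (a - x)] gives [a^3/6 = int x (a - x) Re (w g) + 2 nu int u], hence
   the lower bound [a^3 <= C (|w| + nu) |int g|].  Finally [|w| + nu] and [<omega>^2] are
   comparable on [S x (Z^2 \ 0)].  Existence, and the global smoothness needed to integrate by
   parts, come from the explicit solution [1/w + c1 e^(k z) + c2 e^(- k z)], [nu k^2 = w]. *)

Lemma ex_derive_continuous_R (f : R -> R) x : ex_derive f x -> continuous f x.
Proof. apply (ex_derive_continuous (K:=R_AbsRing) (V:=R_NormedModule)). Qed.

(* Stated with an eta-expanded function, the form in which [auto_derive] leaves derivatives. *)
Lemma Derive_of_is_derive (f : R -> R) x l : is_derive f x l -> Derive (fun t => f t) x = l.
Proof. apply is_derive_unique. Qed.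

Lemma ex_RInt_continuous_R (f : R -> R) b c :
  (forall x, continuous f x) -> ex_RInt f b c.
Proof. intros Hf; apply (ex_RInt_continuous (V:=R_CompleteNormedModule)); auto. Qed.

Lemma RInt_plus_continuous (f g : R -> R) b c :
  (forall x, continuous f x) -> (forall x, continuous g x) ->
  RInt (fun x => f x + g x) b c = RInt f b c + RInt g b c.
Proof. intros; apply (RInt_plus (V:=R_CompleteNormedModule)); apply ex_RInt_continuous_R; auto. Qed.

Lemma RInt_scal_continuous (f : R -> R) k b c : (forall x, continuous f x) ->
  RInt (fun x => k * f x) b c = k * RInt f b c.
Proof. intros; apply (RInt_scal (V:=R_CompleteNormedModule)); apply ex_RInt_continuous_R; auto. Qed.

Lemma RInt_le_continuous (f g : R -> R) b c : b <= c ->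
  (forall x, continuous f x) -> (forall x, continuous g x) ->
  (forall x, b < x < c -> f x <= g x) -> RInt f b c <= RInt g b c.
Proof. intros; apply RInt_le; auto; apply ex_RInt_continuous_R; auto. Qed.

Lemma RInt_derive_continuous (h dh : R -> R) b c :
  (forall x, is_derive h x (dh x)) -> (forall x, continuous dh x) ->
  RInt dh b c = h c - h b.
Proof.
  intros Hd Hc.
  exact (is_RInt_unique _ _ _ _
    (is_RInt_derive (V:=R_CompleteNormedModule) h dh b c (fun x _ => Hd x) (fun x _ => Hc x))).
Qed.

Lemma RInt_add_derivative (f g h dh : R -> R) b c :
  (forall x, f x = g x + dh x) -> (forall x, is_derive h x (dh x)) ->
  (forall x, continuous g x) -> (forall x, continuous dh x) ->
  RInt f b c = RInt g b c + (h c - h b).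
Proof.
  intros Ef Hd Hg Hdh.
  rewrite (RInt_ext f (fun x => g x + dh x)) by auto.
  rewrite RInt_plus_continuous by auto.
  now rewrite (RInt_derive_continuous h dh).
Qed.

Lemma young_sq (c f x : R) : 0 < c -> f * x <= c * x^2 + f^2 / (4*c).
Proof.
  intros Hc.
  assert (E : c * x^2 + f^2 / (4*c) - f * x = (f - 2*c*x)^2 / (4*c)) by (field; lra).
  assert (0 <= (f - 2*c*x)^2 / (4*c)) by (apply Rdiv_le_0_compat; [apply pow2_ge_0 | lra]).
  lra.
Qed.

Lemma Rabs_le_young (t x : R) : 0 < t -> Rabs x <= t * x^2 + / (4*t).
Proof.
  intros Ht. replace (/ (4*t)) with (1^2 / (4*t)) by (field; lra).
  destruct (Rle_dec 0 x).
  - rewrite Rabs_right by lra. rewrite <- (Rmult_1_l x) at 1. now apply young_sq.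
  - rewrite Rabs_left by lra. replace (1^2) with ((-1)^2) by ring.
    replace (- x) with (-1 * x) by ring. now apply young_sq.
Qed.

Lemma is_derive_zero_const {V : NormedModule R_AbsRing} (F : R -> V) b c :
  (forall z, b < z < c -> is_derive F z zero) ->
  forall z1 z2, b < z1 < c -> b < z2 < c -> F z1 = F z2.
Proof.
  intros HF.
  assert (Hlt : forall z1 z2, b < z1 < c -> b < z2 < c -> z1 < z2 -> F z1 = F z2).
  { intros z1 z2 H1 H2 H12. apply eq_is_derive; auto.
    intros t Ht. apply HF. lra. }
  intros z1 z2 H1 H2.
  destruct (Rtotal_order z1 z2) as [H12 | [-> | H21]]; auto.
  symmetry; auto.
Qed.

Lemma agree_on_open_at_left {V : NormedModule R_AbsRing} (f h : R -> V) a : 0 < a ->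
  continuous f 0 -> continuous h 0 -> (forall z, 0 < z < a -> f z = h z) -> f 0 = h 0.
Proof.
  intros ha Hf Hh E.
  apply (filterlim_locally_unique (K:=R_AbsRing) (V:=V) (F := at_right 0) f).
  - eapply filterlim_filter_le_1; [| exact Hf].
    intros P HP. unfold at_right, within. apply (filter_imp P); auto.
  - eapply filterlim_ext_loc; [| eapply filterlim_filter_le_1; [| exact Hh]].
    + exists (mkposreal a ha). intros y Hy Hy0. symmetry. apply E.
      change (Rabs (y - 0) < a) in Hy. apply Rabs_def2 in Hy. lra.
    + intros P HP. unfold at_right, within. apply (filter_imp P); auto.
Qed.

Lemma agree_on_open_at_right {V : NormedModule R_AbsRing} (f h : R -> V) a : 0 < a ->
  continuous f a -> continuous h a -> (forall z, 0 < z < a -> f z = h z) -> f a = h a.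
Proof.
  intros ha Hf Hh E.
  apply (filterlim_locally_unique (K:=R_AbsRing) (V:=V) (F := at_left a) f).
  - eapply filterlim_filter_le_1; [| exact Hf].
    intros P HP. unfold at_left, within. apply (filter_imp P); auto.
  - eapply filterlim_ext_loc; [| eapply filterlim_filter_le_1; [| exact Hh]].
    + exists (mkposreal a ha). intros y Hy Hy0. symmetry. apply E.
      change (Rabs (y - a) < a) in Hy. apply Rabs_def2 in Hy. lra.
    + intros P HP. unfold at_left, within. apply (filter_imp P); auto.
Qed.

Lemma upper_bound_transfer (I C P J K : R) :
  0 < P -> 0 < J -> 0 <= C -> I <= C / P -> J <= K * P -> I <= C * K / J.
Proof.
  intros HP HJ HC HI HJP. eapply Rle_trans; [exact HI |].
  apply (Rmult_le_reg_r (P * J)); [apply Rmult_lt_0_compat; assumption |].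
  replace (C / P * (P * J)) with (C * J) by (field; lra).
  replace (C * K / J * (P * J)) with (C * (K * P)) by (field; lra).
  apply Rmult_le_compat_l; assumption.
Qed.

Lemma lower_bound_transfer (A B X I J K : R) :
  0 < B -> 0 < K -> 0 < J -> 0 <= I -> A <= B * X * I -> X <= K * J -> A / (B * K) / J <= I.
Proof.
  intros HB HK HJ HI HA HX.
  apply (Rmult_le_reg_r (B * K * J)); [repeat apply Rmult_lt_0_compat; assumption |].
  replace (A / (B * K) / J * (B * K * J)) with A by (field; lra).
  eapply Rle_trans; [exact HA |].
  replace (I * (B * K * J)) with (B * (K * J) * I) by ring.
  apply Rmult_le_compat_r; [exact HI |]. apply Rmult_le_compat_l; lra.
Qed.

(** * Energy identities *)

Section Energy.
Variables (a nu p q : R) (u v u1 v1 u2 v2 : R -> R).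
Hypothesis Du : forall x, is_derive u x (u1 x).
Hypothesis Du1 : forall x, is_derive u1 x (u2 x).
Hypothesis Dv : forall x, is_derive v x (v1 x).
Hypothesis Dv1 : forall x, is_derive v1 x (v2 x).
Hypothesis ode_re : forall x, p * u x - q * v x - nu * u2 x = 1.
Hypothesis ode_im : forall x, p * v x + q * u x - nu * v2 x = 0.
Hypotheses (u_0 : u 0 = 0) (v_0 : v 0 = 0) (u_a : u a = 0) (v_a : v a = 0).
Hypotheses (a_pos : 0 < a) (nu_pos : 0 < nu).

Let ex_u x : ex_derive u x := ex_intro _ _ (Du x).
Let ex_v x : ex_derive v x := ex_intro _ _ (Dv x).
Let ex_u1 x : ex_derive u1 x := ex_intro _ _ (Du1 x).
Let ex_v1 x : ex_derive v1 x := ex_intro _ _ (Dv1 x).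
Let Derive_u x : Derive (fun y => u y) x = u1 x := Derive_of_is_derive _ _ _ (Du x).
Let Derive_v x : Derive (fun y => v y) x = v1 x := Derive_of_is_derive _ _ _ (Dv x).
Let Derive_u1 x : Derive (fun y => u1 y) x = u2 x := Derive_of_is_derive _ _ _ (Du1 x).
Let Derive_v1 x : Derive (fun y => v1 y) x = v2 x := Derive_of_is_derive _ _ _ (Dv1 x).

(* The equation itself shows that [u2] and [v2] are differentiable. *)
Lemma u2_eq y : u2 y = (p * u y - q * v y - 1) / nu.
Proof. rewrite <- (ode_re y). field. lra. Qed.

Lemma v2_eq y : v2 y = (p * v y + q * u y) / nu.
Proof.
  replace (p * v y + q * u y) with (nu * v2 y) by (pose proof (ode_im y); lra). field. lra.
Qed.

Lemma is_derive_u2 x : is_derive u2 x ((p * u1 x - q * v1 x) / nu).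
Proof.
  apply is_derive_ext with (fun y => (p * u y - q * v y - 1) / nu).
  { intros y. symmetry. apply u2_eq. }
  auto_derive.
  - repeat split; auto.
  - rewrite Derive_u, Derive_v. field. lra.
Qed.

Lemma is_derive_v2 x : is_derive v2 x ((p * v1 x + q * u1 x) / nu).
Proof.
  apply is_derive_ext with (fun y => (p * v y + q * u y) / nu).
  { intros y. symmetry. apply v2_eq. }
  auto_derive.
  - repeat split; auto.
  - rewrite Derive_u, Derive_v. field. lra.
Qed.

Let ex_u2 x : ex_derive u2 x := ex_intro _ _ (is_derive_u2 x).
Let ex_v2 x : ex_derive v2 x := ex_intro _ _ (is_derive_v2 x).

Ltac ex_derives := repeat split; auto.
Ltac solve_continuous := intros; apply ex_derive_continuous_R; auto_derive; ex_derives.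
Ltac solve_derive := auto_derive; [ex_derives |
  rewrite ?Derive_u, ?Derive_v, ?Derive_u1, ?Derive_v1; ring].

Definition mass := RInt (fun x => u x ^ 2 + v x ^ 2) 0 a.
Definition dirichlet_energy := RInt (fun x => u1 x ^ 2 + v1 x ^ 2) 0 a.

Lemma mass_nonneg : 0 <= mass.
Proof.
  apply RInt_ge_0; [lra | apply ex_RInt_continuous_R; solve_continuous |].
  intros; nra.
Qed.

Lemma dirichlet_energy_nonneg : 0 <= dirichlet_energy.
Proof.
  apply RInt_ge_0; [lra | apply ex_RInt_continuous_R; solve_continuous |].
  intros; nra.
Qed.

Lemma ode_scaled (r s : R -> R) x :
  r x * (p * u x - q * v x - nu * u2 x) = r x /\ s x * (p * v x + q * u x - nu * v2 x) = 0.
Proof. rewrite ode_re, ode_im. split; ring. Qed.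

(* Multiply the equation by the conjugate of [u + i v] and integrate by parts. *)
Lemma energy_re : p * mass + nu * dirichlet_energy = RInt u 0 a.
Proof.
  unfold mass, dirichlet_energy.
  rewrite <- (RInt_scal_continuous (fun x => u x ^ 2 + v x ^ 2)),
    <- (RInt_scal_continuous (fun x => u1 x ^ 2 + v1 x ^ 2)),
    <- RInt_plus_continuous by solve_continuous.
  rewrite (RInt_add_derivative _ u (fun x => nu * (u x * u1 x + v x * v1 x))
             (fun x => nu * (u1 x ^ 2 + u x * u2 x + v1 x ^ 2 + v x * v2 x)));
    [| intros x; destruct (ode_scaled u v x); nra
     | intros x; solve_derive | solve_continuous | solve_continuous].
  rewrite u_0, v_0, u_a, v_a. ring.
Qed.

Lemma energy_im : - q * mass = RInt v 0 a.
Proof.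
  unfold mass.
  rewrite <- (RInt_scal_continuous (fun x => u x ^ 2 + v x ^ 2)) by solve_continuous.
  rewrite (RInt_add_derivative _ v (fun x => nu * (v x * u1 x - u x * v1 x))
             (fun x => nu * (v x * u2 x - u x * v2 x)));
    [| intros x; destruct (ode_scaled v u x); nra
     | intros x; solve_derive | solve_continuous | solve_continuous].
  rewrite u_0, v_0, u_a, v_a. ring.
Qed.

(* Test the real part of the equation against the weight [x (a - x)]. *)
Lemma moment_identity :
  RInt (fun x => x * (a - x) * (p * u x - q * v x)) 0 a + 2 * nu * RInt u 0 a = a ^ 3 / 6.
Proof.
  rewrite <- RInt_scal_continuous, <- RInt_plus_continuous by solve_continuous.
  rewrite (RInt_add_derivative _ (fun x => x * (a - x))
             (fun x => nu * (x * (a - x) * u1 x - (a - 2 * x) * u x))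
             (fun x => nu * (x * (a - x) * u2 x + 2 * u x)));
    [| intros x; destruct (ode_scaled (fun y => y * (a - y)) u x); nra
     | intros x; solve_derive | solve_continuous | solve_continuous].
  rewrite (RInt_derive_continuous (fun x => a * x ^ 2 / 2 - x ^ 3 / 3));
    [| intros x; auto_derive; auto; field | solve_continuous].
  rewrite u_0, u_a. field.
Qed.

Lemma moment_lower_bound : 0 < p ^ 2 + q ^ 2 ->
  a ^ 3 / 12 <= 3 * a ^ 2 / 16 * (p ^ 2 + q ^ 2) * mass + 2 * nu * Rabs (RInt u 0 a).
Proof.
  intros HQ.
  set (c := 3 * a ^ 2 / 16 * (p ^ 2 + q ^ 2)).
  assert (Hc : 0 < c) by (unfold c; apply Rmult_lt_0_compat; [nra | lra]).
  assert (Hweight : RInt (fun x => x * (a - x) * (p * u x - q * v x)) 0 a <= c * mass + a ^ 3 / 12).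
  { replace (a ^ 3 / 12) with (RInt (fun _ => a ^ 2 / 12) 0 a)
      by (rewrite RInt_const; cbv [scal]; simpl; unfold mult; simpl; field).
    unfold mass. rewrite <- RInt_scal_continuous, <- RInt_plus_continuous by solve_continuous.
    apply RInt_le_continuous; [lra | solve_continuous | solve_continuous |].
    intros x Hx.
    (* Young's inequality, with [c] chosen so that the weight [phi <= a^2/4] costs [a^2/12]. *)
    set (phi := x * (a - x)).
    assert (Hphi : 0 <= phi <= a ^ 2 / 4).
    { unfold phi; split; [nra |]. pose proof (pow2_ge_0 (a - 2 * x)). nra. }
    pose proof (young_sq c (phi * p) (u x) Hc).
    pose proof (young_sq c (- (phi * q)) (v x) Hc).
    assert ((phi * p) ^ 2 / (4 * c) + (- (phi * q)) ^ 2 / (4 * c) <= a ^ 2 / 12).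
    { replace ((phi * p) ^ 2 / (4 * c) + (- (phi * q)) ^ 2 / (4 * c))
        with (phi ^ 2 * (4 / (3 * a ^ 2))) by (unfold c; field; split; lra).
      replace (a ^ 2 / 12) with ((a ^ 2 / 4) ^ 2 * (4 / (3 * a ^ 2))) by (field; lra).
      apply Rmult_le_compat_r; [apply Rlt_le, Rdiv_lt_0_compat; nra |].
      apply pow_incr; lra. }
    nra. }
  pose proof moment_identity. pose proof (Rle_abs (RInt u 0 a)).
  fold c. nra.
Qed.

Lemma RInt_abs_sum_le t : 0 < t ->
  Rabs (RInt u 0 a) + Rabs (RInt v 0 a) <= t * mass + a / (2 * t).
Proof.
  intros Ht.
  pose proof (abs_RInt_le u 0 a ltac:(lra) ltac:(apply ex_RInt_continuous_R; solve_continuous)).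
  pose proof (abs_RInt_le v 0 a ltac:(lra) ltac:(apply ex_RInt_continuous_R; solve_continuous)).
  assert (Hint : RInt (fun x => Rabs (u x)) 0 a + RInt (fun x => Rabs (v x)) 0 a
                 <= t * mass + a / (2 * t)).
  { replace (a / (2 * t)) with (RInt (fun _ => / (2 * t)) 0 a)
      by (rewrite RInt_const; cbv [scal]; simpl; unfold mult; simpl; field; lra).
    unfold mass.
    rewrite <- RInt_scal_continuous, <- !RInt_plus_continuous;
      try (intros; apply continuous_Rabs_comp); try solve_continuous.
    apply RInt_le_continuous; [lra | | solve_continuous |].
    - intros x. apply (continuous_plus (V:=R_NormedModule));
        apply continuous_Rabs_comp; solve_continuous.
    - intros x _.
      pose proof (Rabs_le_young t (u x) Ht). pose proof (Rabs_le_young t (v x) Ht).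
      replace (/ (2 * t)) with (/ (4 * t) + / (4 * t)) by (field; lra). lra. }
  lra.
Qed.

Section Sector.
Variable d1 : R.
Hypothesis d1_pos : 0 < d1.
Hypothesis sector : p < 0 -> - p <= d1 * Rabs q.

(* For [p >= 0] use [energy_re]; otherwise the sector condition bounds [|p|] by [d1 |q|],
   which [energy_im] controls. *)
Lemma sector_mass_le :
  (Rabs p + Rabs q) * mass <= (1 + d1) * (Rabs (RInt u 0 a) + Rabs (RInt v 0 a)).
Proof.
  pose proof mass_nonneg. pose proof dirichlet_energy_nonneg.
  pose proof energy_re as Hre.
  assert (Hv : Rabs q * mass = Rabs (RInt v 0 a)).
  { rewrite <- energy_im, Rabs_mult, Rabs_Ropp, (Rabs_right mass) by lra. reflexivity. }
  pose proof (Rabs_pos (RInt u 0 a)). pose proof (Rabs_pos (RInt v 0 a)).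
  pose proof (Rle_abs (RInt u 0 a)).
  destruct (Rle_dec 0 p).
  - rewrite Rabs_right by lra. nra.
  - rewrite Rabs_left by lra.
    assert (- p * mass <= d1 * Rabs q * mass) by (apply Rmult_le_compat_r; auto; lra).
    nra.
Qed.

Lemma RInt_abs_sum_upper : 0 < Rabs p + Rabs q ->
  Rabs (RInt u 0 a) + Rabs (RInt v 0 a) <= 2 * a * (1 + d1) / (Rabs p + Rabs q).
Proof.
  intros HP.
  set (P := Rabs p + Rabs q) in *.
  set (S := Rabs (RInt u 0 a) + Rabs (RInt v 0 a)).
  (* With [t = P / (2 (1 + d1))] the mass term is at most [S / 2]. *)
  pose proof (RInt_abs_sum_le (P / (2 * (1 + d1))) ltac:(apply Rdiv_lt_0_compat; lra)) as Hle.
  pose proof sector_mass_le as Hsec. fold P S in Hle, Hsec.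
  replace (P / (2 * (1 + d1)) * mass) with (P * mass / (2 * (1 + d1))) in Hle by (field; lra).
  replace (a / (2 * (P / (2 * (1 + d1))))) with (a * (1 + d1) / P) in Hle by (field; lra).
  assert (P * mass / (2 * (1 + d1)) <= S / 2).
  { apply (Rmult_le_reg_r (2 * (1 + d1))); [lra |].
    replace (P * mass / (2 * (1 + d1)) * (2 * (1 + d1))) with (P * mass) by (field; lra). nra. }
  replace (2 * a * (1 + d1) / P) with (2 * (a * (1 + d1) / P)) by (field; lra).
  lra.
Qed.

Lemma RInt_abs_sum_lower : 0 < Rabs p + Rabs q ->
  a ^ 3 / 12 <= (3 * a ^ 2 / 16 * (1 + d1) * (Rabs p + Rabs q) + 2 * nu)
                * (Rabs (RInt u 0 a) + Rabs (RInt v 0 a)).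
Proof.
  intros HP.
  set (P := Rabs p + Rabs q) in *.
  set (S := Rabs (RInt u 0 a) + Rabs (RInt v 0 a)).
  pose proof (Rabs_pos p). pose proof (Rabs_pos q).
  assert (HQ : p ^ 2 + q ^ 2 <= P * P).
  { unfold P. rewrite <- (pow2_abs p), <- (pow2_abs q). nra. }
  assert (HQ0 : 0 < p ^ 2 + q ^ 2).
  { destruct (Rle_lt_dec (p ^ 2 + q ^ 2) 0) as [Hle|]; [exfalso | assumption].
    assert (Hp : p = 0) by nra. assert (Hq : q = 0) by nra.
    unfold P in HP. rewrite Hp, Hq, Rabs_R0 in HP. lra. }
  pose proof (moment_lower_bound HQ0).
  pose proof sector_mass_le as Hsec. fold P S in Hsec.
  pose proof mass_nonneg. pose proof (Rabs_pos (RInt v 0 a)).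
  assert (Rabs (RInt u 0 a) <= S) by (unfold S; lra).
  assert ((p ^ 2 + q ^ 2) * mass <= P * ((1 + d1) * S)) by nra.
  assert (0 < a ^ 2) by nra.
  nra.
Qed.
End Sector.
End Energy.

(** * Complex-valued functions of a real variable *)

Lemma C_ext (z w : C) : fst z = fst w -> snd z = snd w -> z = w.
Proof. intros; apply injective_projections; auto. Qed.

Lemma is_derive_C_fst (f : R -> C) x l :
  is_derive f x l -> is_derive (fun t => fst (f t)) x (fst l).
Proof.
  intros H.
  apply (filterdiff_comp f (fun z : C_R_NormedModule => fst z) _
           (fun z : C_R_NormedModule => fst z) H).
  apply filterdiff_linear, is_linear_fst.
Qed.

Lemma is_derive_C_snd (f : R -> C) x l :
  is_derive f x l -> is_derive (fun t => snd (f t)) x (snd l).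
Proof.
  intros H.
  apply (filterdiff_comp f (fun z : C_R_NormedModule => snd z) _
           (fun z : C_R_NormedModule => snd z) H).
  apply filterdiff_linear, is_linear_snd.
Qed.

Lemma is_derive_C_pair (f g : R -> R) x l m :
  is_derive f x l -> is_derive g x m -> is_derive (fun t => (f t, g t) : C) x ((l, m) : C).
Proof.
  intros Hf Hg.
  apply (filterdiff_comp_2 (U:=R_NormedModule) (V:=R_NormedModule) (W:=C_R_NormedModule)
           f g (fun y z => (y, z)) _ _ (fun y z => (y, z)) Hf Hg).
  apply filterdiff_linear.
  apply (is_linear_prod (T:=prod_NormedModule R_AbsRing R_NormedModule R_NormedModule)
           (U:=R_NormedModule) (V:=R_NormedModule));
    [apply is_linear_fst | apply is_linear_snd].
Qed.

Lemma is_derive_C_components (f : R -> C) x l :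
  is_derive (fun t => fst (f t)) x (fst l) -> is_derive (fun t => snd (f t)) x (snd l) ->
  is_derive f x l.
Proof.
  intros H1 H2. apply is_derive_ext with (fun t => (fst (f t), snd (f t)) : C).
  - intros t. now destruct (f t).
  - destruct l. now apply is_derive_C_pair.
Qed.

Open Scope C_scope.

Lemma is_derive_C_plus (f g : R -> C) x l m :
  is_derive f x l -> is_derive g x m -> is_derive (fun t => f t + g t) x (l + m).
Proof.
  intros Hf Hg. apply is_derive_C_components; simpl;
    apply (is_derive_plus (K:=R_AbsRing) (V:=R_NormedModule));
    auto using is_derive_C_fst, is_derive_C_snd.
Qed.

Lemma is_derive_C_mult_pair (f1 f2 g1 g2 : R -> R) x l1 l2 m1 m2 :
  is_derive f1 x l1 -> is_derive f2 x l2 -> is_derive g1 x m1 -> is_derive g2 x m2 ->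
  is_derive (fun t => (f1 t, f2 t) * (g1 t, g2 t)) x
    ((l1, l2) * (g1 x, g2 x) + (f1 x, f2 x) * (m1, m2)).
Proof.
  intros Hf1 Hf2 Hg1 Hg2.
  apply is_derive_C_components; simpl; auto_derive;
    try (repeat split; eexists; eassumption);
    rewrite (Derive_of_is_derive _ _ _ Hf1), (Derive_of_is_derive _ _ _ Hf2),
      (Derive_of_is_derive _ _ _ Hg1), (Derive_of_is_derive _ _ _ Hg2); ring.
Qed.

Lemma is_derive_C_mult (f g : R -> C) x l m :
  is_derive f x l -> is_derive g x m -> is_derive (fun t => f t * g t) x (l * g x + f x * m).
Proof.
  intros Hf Hg.
  replace (l * g x + f x * m) with
    ((fst l, snd l) * (fst (g x), snd (g x)) + (fst (f x), snd (f x)) * (fst m, snd m))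
    by (destruct l, m, (f x), (g x); reflexivity).
  apply is_derive_ext with (fun t => (fst (f t), snd (f t)) * (fst (g t), snd (g t))).
  { intros t. now destruct (f t), (g t). }
  apply is_derive_C_mult_pair;
    auto using is_derive_C_fst, is_derive_C_snd.
Qed.

Lemma is_derive_C_const (c : C) x : is_derive (fun _ : R => c) x (RtoC 0).
Proof.
  apply is_derive_C_components; simpl;
    apply (is_derive_const (K:=R_AbsRing) (V:=R_NormedModule)).
Qed.

Lemma is_derive_C_scal (c : C) (f : R -> C) x l :
  is_derive f x l -> is_derive (fun t => c * f t) x (c * l).
Proof.
  intros H. replace (c * l) with (RtoC 0 * f x + c * l) by ring.
  exact (is_derive_C_mult _ f x (RtoC 0) l (is_derive_C_const c x) H).
Qed.

Definition cexp (k : C) (t : R) : C :=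
  ((exp (fst k * t) * cos (snd k * t))%R, (exp (fst k * t) * sin (snd k * t))%R).

Lemma is_derive_cexp k x : is_derive (cexp k) x (k * cexp k x).
Proof.
  apply is_derive_C_components; unfold cexp; simpl; auto_derive; auto; ring.
Qed.

Lemma cexp_0 k : cexp k 0 = 1.
Proof.
  unfold cexp. apply C_ext; simpl; rewrite !Rmult_0_r, exp_0;
    [rewrite cos_0 | rewrite sin_0]; ring.
Qed.

Lemma cexp_mult_opp k t : cexp k t * cexp (- k) t = 1.
Proof.
  unfold cexp. simpl.
  replace (- fst k * t)%R with (- (fst k * t))%R by ring.
  replace (- snd k * t)%R with (- (snd k * t))%R by ring.
  rewrite cos_neg, sin_neg, exp_Ropp.
  pose proof (exp_pos (fst k * t)). pose proof (sin2_cos2 (snd k * t)) as Hsc. unfold Rsqr in Hsc.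
  apply C_ext; simpl; field_simplify; try lra; rewrite <- Hsc; ring.
Qed.

Lemma Cmod_cexp k t : Cmod (cexp k t) = exp (fst k * t).
Proof.
  unfold Cmod, cexp. cbn [fst snd].
  pose proof (exp_pos (fst k * t)). pose proof (sin2_cos2 (snd k * t)) as Hsc. unfold Rsqr in Hsc.
  replace ((exp (fst k * t) * cos (snd k * t)) ^ 2 + (exp (fst k * t) * sin (snd k * t)) ^ 2)%R
    with (exp (fst k * t) ^ 2)%R by (rewrite <- (Rmult_1_r (exp _ ^ 2)), <- Hsc; ring).
  apply sqrt_pow2. lra.
Qed.

(** * Explicit solutions *)

(* Solutions of [w g - nu g'' = 1] are [1/w + c1 e^(k z) + c2 e^(-k z)] with [nu k^2 = w]. *)
Definition exp_comb (k c0 c1 c2 : C) (t : R) : C := c0 + c1 * cexp k t + c2 * cexp (- k) t.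

Lemma is_derive_exp_comb k c0 c1 c2 t :
  is_derive (exp_comb k c0 c1 c2) t (exp_comb k 0 (k * c1) (- k * c2) t).
Proof.
  unfold exp_comb.
  replace (0 + k * c1 * cexp k t + - k * c2 * cexp (- k) t)
    with (0 + c1 * (k * cexp k t) + c2 * (- k * cexp (- k) t)) by ring.
  apply is_derive_C_plus; [apply is_derive_C_plus |].
  - apply is_derive_C_const.
  - apply is_derive_C_scal, is_derive_cexp.
  - apply is_derive_C_scal, is_derive_cexp.
Qed.

Lemma continuous_exp_comb k c0 c1 c2 t : continuous (exp_comb k c0 c1 c2) t.
Proof.
  apply (ex_derive_continuous (K:=R_AbsRing) (V:=C_R_NormedModule)).
  eexists. apply is_derive_exp_comb.
Qed.

Lemma exp_comb_ode (nu : R) (w k c1 c2 : C) t : w <> 0 -> nu * (k * k) = w ->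
  w * exp_comb k (/ w) c1 c2 t - nu * exp_comb k 0 (k * (k * c1)) (- k * (- k * c2)) t = 1.
Proof.
  intros Hw Hk. unfold exp_comb.
  replace (nu * (0 + k * (k * c1) * cexp k t + - k * (- k * c2) * cexp (- k) t))
    with (nu * (k * k) * (c1 * cexp k t + c2 * cexp (- k) t)) by ring.
  rewrite Hk. field. exact Hw.
Qed.

Lemma RtoC_neq_0 r : r <> 0%R -> RtoC r <> 0.
Proof. intros H E. apply H. exact (f_equal fst E). Qed.

(* [(g' + k (g - 1/w)) e^(-kz)] and [(g' - k (g - 1/w)) e^(kz)] are first integrals. *)
Lemma ode_sol_exp_comb (a nu : R) (w k : C) (g g1 g2 : R -> C) :
  (0 < a)%R -> nu <> 0%R -> w <> 0 -> k <> 0 -> nu * (k * k) = w ->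
  (forall z, (0 < z < a)%R ->
     is_derive g z (g1 z) /\ is_derive g1 z (g2 z) /\ w * g z - nu * g2 z = 1) ->
  exists c1 c2, forall z, (0 < z < a)%R -> g z = exp_comb k (/ w) c1 c2 z.
Proof.
  intros Ha Hnu Hw Hk Hkk Hode.
  assert (Hnu' := RtoC_neq_0 _ Hnu).
  assert (H2 : RtoC 2 <> 0) by (apply RtoC_neq_0; lra).
  set (F s z := (g1 z + s * (g z - / w)) * cexp (- s) z).
  assert (DF : forall s, s * s = k * k -> forall z, (0 < z < a)%R -> is_derive (F s) z (RtoC 0)).
  { intros s Hs z Hz. destruct (Hode z Hz) as [Dg [Dg1 Hz_ode]].
    assert (Hg2 : g2 z = s * s * (g z - / w)).
    { replace (g2 z) with ((w * g z - 1) / nu) by (rewrite <- Hz_ode; field; exact Hnu').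
      rewrite Hs, <- Hkk. field. split; assumption. }
    unfold F. replace (RtoC 0) with
      ((g2 z + s * (g1 z + RtoC 0)) * cexp (- s) z
       + (g1 z + s * (g z - / w)) * (- s * cexp (- s) z))
      by (rewrite Hg2; ring).
    apply is_derive_C_mult; [| apply is_derive_cexp].
    apply is_derive_C_plus; [exact Dg1 |].
    apply is_derive_C_scal, is_derive_C_plus; [exact Dg | apply is_derive_C_const]. }
  exists (F k (a / 2)%R / (RtoC 2 * k)), (- F (- k) (a / 2)%R / (RtoC 2 * k)).
  intros z Hz.
  rewrite (is_derive_zero_const (F k) 0 a (DF k eq_refl) (a / 2)%R z) by lra.
  rewrite (is_derive_zero_const (F (- k)) 0 a (DF (- k) ltac:(ring)) (a / 2)%R z) by lra.
  unfold F, exp_comb. replace (- - k) with k by ring.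
  assert (HE := cexp_mult_opp k z).
  transitivity (/ w + (g z - / w) * (cexp k z * cexp (- k) z)); [rewrite HE; ring |].
  field. split; assumption.
Qed.

Close Scope C_scope.

Definition slit_plane (z : C) : Prop := snd z = 0 -> 0 < fst z.

Lemma slit_plane_neq_0 (w : C) : slit_plane w -> w <> RtoC 0.
Proof. intros Hw E. rewrite E in Hw. specialize (Hw eq_refl). simpl in Hw. lra. Qed.

Lemma exists_sqrt_Re_pos (z : C) : slit_plane z ->
  exists k : C, (k * k)%C = z /\ 0 < fst k.
Proof.
  intros Hz.
  set (m := Cmod z).
  assert (Hm2 : m * m = fst z ^ 2 + snd z ^ 2).
  { unfold m, Cmod. rewrite sqrt_sqrt; [ring | nra]. }
  assert (Hpos : 0 < m + fst z).
  { assert (0 <= m) by apply Cmod_ge_0.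
    destruct (Req_dec (snd z) 0) as [h | h]; [specialize (Hz h); lra |].
    assert (0 < snd z ^ 2) by (apply pow2_gt_0; auto). nra. }
  set (al := sqrt ((m + fst z) / 2)).
  assert (Hal : al * al = (m + fst z) / 2) by (apply sqrt_sqrt; lra).
  assert (Hal0 : 0 < al) by (apply sqrt_lt_R0; lra).
  exists (al, snd z / (2 * al)). split; [| simpl; lra].
  apply C_ext; simpl.
  - replace (al * al - snd z / (2 * al) * (snd z / (2 * al)))
      with (al * al - snd z ^ 2 / (4 * (al * al))) by (field; lra).
    rewrite Hal. replace (snd z ^ 2) with (m * m - fst z ^ 2) by lra. field. lra.
  - field. lra.
Qed.

Lemma exp_comb_dirichlet (a : R) (w k : C) : 0 < a -> 0 < fst k -> w <> RtoC 0 ->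
  exists c1 c2, exp_comb k (/ w) c1 c2 0 = RtoC 0 /\ exp_comb k (/ w) c1 c2 a = RtoC 0.
Proof.
  intros ha hk hw.
  set (E := cexp k a).
  assert (HE1 : (E + 1)%C <> RtoC 0).
  { intros H. assert (HE : E = RtoC (-1)).
    { replace E with ((E + 1) - 1)%C by ring. rewrite H. apply C_ext; simpl; ring. }
    assert (Hm := Cmod_cexp k a). fold E in Hm. rewrite HE, Cmod_R, Rabs_left in Hm by lra.
    assert (1 < exp (fst k * a)) by (rewrite <- exp_0; apply exp_increasing; nra). lra. }
  exists (- / (w * (E + 1)))%C, (- E / (w * (E + 1)))%C.
  unfold exp_comb. rewrite !cexp_0. split.
  - field. split; assumption.
  - fold E. pose proof (cexp_mult_opp k a) as HEm. fold E in HEm.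
    transitivity (/ w - (E + E * cexp (- k) a) / (w * (E + 1)))%C; [field; split; assumption |].
    rewrite HEm. field. split; assumption.
Qed.

(** * Bounds on the integral of a solution *)

Definition l1norm (z : C) : R := Rabs (fst z) + Rabs (snd z).

(* [omega^2] lies in this sector when [lam] is in [S]. *)
Definition in_sector (d1 : R) (w : C) : Prop := fst w < 0 -> - fst w <= d1 * Rabs (snd w).

Lemma Cmod_le_l1norm (z : C) : Cmod z <= l1norm z.
Proof.
  destruct z as [x y]. unfold Cmod, l1norm; cbn [fst snd].
  pose proof (Rabs_pos x). pose proof (Rabs_pos y).
  rewrite <- (sqrt_pow2 (Rabs x + Rabs y)) by lra.
  apply sqrt_le_1_alt. rewrite <- (pow2_abs x), <- (pow2_abs y). nra.
Qed.

Lemma l1norm_le_Cmod (z : C) : l1norm z <= 2 * Cmod z.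
Proof.
  destruct z as [x y]. unfold Cmod, l1norm; cbn [fst snd].
  pose proof (pow2_ge_0 x). pose proof (pow2_ge_0 y).
  assert (Rabs x <= sqrt (x ^ 2 + y ^ 2)).
  { rewrite <- (sqrt_pow2 (Rabs x)) by apply Rabs_pos. apply sqrt_le_1_alt. rewrite pow2_abs. lra. }
  assert (Rabs y <= sqrt (x ^ 2 + y ^ 2)).
  { rewrite <- (sqrt_pow2 (Rabs y)) by apply Rabs_pos. apply sqrt_le_1_alt. rewrite pow2_abs. lra. }
  lra.
Qed.

Lemma cint_components (a : R) (g g1 : R -> C) : (forall x, is_derive g x (g1 x)) ->
  cint a g = (RInt (fun t => fst (g t)) 0 a, RInt (fun t => snd (g t)) 0 a).
Proof.
  intros Dg. apply (is_RInt_unique (V:=C_R_CompleteNormedModule)).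
  apply (is_RInt_fct_extend_pair (U:=R_NormedModule) (V:=R_NormedModule));
    apply (RInt_correct (V:=R_CompleteNormedModule)), ex_RInt_continuous_R; intros x;
    apply ex_derive_continuous_R; eexists;
    [apply is_derive_C_fst | apply is_derive_C_snd]; apply Dg.
Qed.

Lemma cint_bounds (a nu d1 : R) (w : C) (g g1 g2 : R -> C) :
  0 < a -> 0 < nu -> 0 < d1 -> in_sector d1 w -> 0 < l1norm w ->
  (forall x, is_derive g x (g1 x)) -> (forall x, is_derive g1 x (g2 x)) ->
  (forall x, (w * g x - nu * g2 x)%C = 1) -> g 0 = 0 -> g a = 0 ->
  Cmod (cint a g) <= 2 * a * (1 + d1) / l1norm w /\
  a ^ 3 / 12 <= 2 * Rmax (3 * a ^ 2 / 16 * (1 + d1)) 2 * (l1norm w + nu) * Cmod (cint a g).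
Proof.
  intros ha hnu hd1 Hsec HP Dg Dg1 Hode Hg0 Hga.
  assert (Hre : forall x, fst w * fst (g x) - snd w * snd (g x) - nu * fst (g2 x) = 1).
  { intros x. generalize (f_equal fst (Hode x)). destruct w, (g x), (g2 x). simpl. lra. }
  assert (Him : forall x, fst w * snd (g x) + snd w * fst (g x) - nu * snd (g2 x) = 0).
  { intros x. generalize (f_equal snd (Hode x)). destruct w, (g x), (g2 x). simpl. lra. }
  assert (Hcomp := cint_components a g g1 Dg).
  pose proof (Cmod_le_l1norm (cint a g)) as Hle. pose proof (l1norm_le_Cmod (cint a g)) as Hge.
  unfold l1norm in Hle, Hge, HP |- *. rewrite Hcomp in Hle, Hge |- *. cbn [fst snd] in Hle, Hge.
  assert (Hbc : forall x, g x = 0 -> fst (g x) = 0 /\ snd (g x) = 0) by (intros x ->; auto).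
  destruct (Hbc 0 Hg0) as [Hu0 Hv0], (Hbc a Hga) as [Hua Hva].
  pose proof (fun x => is_derive_C_fst g x _ (Dg x)) as Du.
  pose proof (fun x => is_derive_C_snd g x _ (Dg x)) as Dv.
  pose proof (fun x => is_derive_C_fst g1 x _ (Dg1 x)) as Du1.
  pose proof (fun x => is_derive_C_snd g1 x _ (Dg1 x)) as Dv1.
  pose proof (RInt_abs_sum_upper a nu (fst w) (snd w) _ _ _ _ _ _
                Du Du1 Dv Dv1 Hre Him Hu0 Hv0 Hua Hva ha hnu d1 hd1 Hsec HP) as Hup.
  pose proof (RInt_abs_sum_lower a nu (fst w) (snd w) _ _ _ _ _ _
                Du Du1 Dv Dv1 Hre Him Hu0 Hv0 Hua Hva ha hnu d1 hd1 Hsec HP) as Hlow.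
  split; [eapply Rle_trans; [exact Hle | exact Hup] |].
  set (M := Rmax (3 * a ^ 2 / 16 * (1 + d1)) 2).
  set (P := Rabs (fst w) + Rabs (snd w)) in *.
  assert (HM : 3 * a ^ 2 / 16 * (1 + d1) * P + 2 * nu <= M * (P + nu)).
  { pose proof (Rmax_l (3 * a ^ 2 / 16 * (1 + d1)) 2).
    pose proof (Rmax_r (3 * a ^ 2 / 16 * (1 + d1)) 2).
    unfold M. nra. }
  assert (0 <= 3 * a ^ 2 / 16 * (1 + d1) * P).
  { pose proof (pow2_ge_0 a). pose proof (Rabs_pos (fst w)). pose proof (Rabs_pos (snd w)).
    unfold P. repeat apply Rmult_le_pos; lra. }
  eapply Rle_trans; [exact Hlow |].
  match goal with
  | |- _ <= _ * ?I => replace (2 * M * (P + nu) * I) with (M * (P + nu) * (2 * I)) by ring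
  end.
  apply Rmult_le_compat; [lra | apply Rplus_le_le_0_compat; apply Rabs_pos | exact HM | exact Hge].
Qed.

Lemma l1norm_pos_slit_plane (w : C) : slit_plane w -> 0 < l1norm w.
Proof.
  intros Hw. unfold l1norm. pose proof (Rabs_pos (fst w)). pose proof (Rabs_pos (snd w)).
  destruct (Req_dec (snd w) 0) as [Him | Him].
  - pose proof (Hw Him). pose proof (Rle_abs (fst w)). lra.
  - pose proof (Rabs_pos_lt _ Him). lra.
Qed.

Lemma exists_ode_root (nu : R) (w : C) : 0 < nu -> slit_plane w ->
  exists k : C, (nu * (k * k))%C = w /\ 0 < fst k.
Proof.
  intros hnu Hw.
  destruct (exists_sqrt_Re_pos (fst w / nu, snd w / nu)) as [k [Hk Hk0]].
  { simpl. intros H. apply Rdiv_lt_0_compat; [apply Hw | lra].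
    apply (Rmult_eq_reg_r (/ nu)); [rewrite Rmult_0_l; exact H | apply Rinv_neq_0_compat; lra]. }
  exists k. split; [| exact Hk0].
  rewrite Hk. apply C_ext; simpl; field; lra.
Qed.

Lemma dirichlet_sol_exists (a nu : R) (w : C) : 0 < a -> 0 < nu -> slit_plane w ->
  exists g, dirichlet_sol a nu w g.
Proof.
  intros ha hnu Hw.
  pose proof (slit_plane_neq_0 w Hw) as Hw0.
  destruct (exists_ode_root nu w hnu Hw) as [k [Hk Hk0]].
  destruct (exp_comb_dirichlet a w k ha Hk0 Hw0) as [c1 [c2 [Hg0 Hga]]].
  exists (exp_comb k (/ w) c1 c2).
  split; [intros; apply continuous_exp_comb |].
  split; [exact Hg0 | split; [exact Hga |]].
  exists (exp_comb k 0 (k * c1) (- k * c2)), (exp_comb k 0 (k * (k * c1)) (- k * (- k * c2))).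
  intros z _. split; [apply is_derive_exp_comb |].
  split; [apply is_derive_exp_comb | apply exp_comb_ode; assumption].
Qed.

Lemma dirichlet_sol_cint_bounds (a nu d1 : R) (w : C) (g : R -> C) :
  0 < a -> 0 < nu -> 0 < d1 -> in_sector d1 w -> slit_plane w -> dirichlet_sol a nu w g ->
  Cmod (cint a g) <= 2 * a * (1 + d1) / l1norm w /\
  a ^ 3 / 12 <= 2 * Rmax (3 * a ^ 2 / 16 * (1 + d1)) 2 * (l1norm w + nu) * Cmod (cint a g).
Proof.
  intros ha hnu hd1 Hsec Hw [Hc [Hg0 [Hga [g1 [g2 Hode]]]]].
  pose proof (slit_plane_neq_0 w Hw) as Hw0.
  destruct (exists_ode_root nu w hnu Hw) as [k [Hk Hk0]].
  assert (Hk_neq : k <> RtoC 0) by (intros E; rewrite E in Hk0; simpl in Hk0; lra).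
  destruct (ode_sol_exp_comb a nu w k g g1 g2 ha ltac:(lra) Hw0 Hk_neq Hk Hode) as [c1 [c2 Hg]].
  set (h := exp_comb k (/ w) c1 c2) in Hg.
  assert (Hh0 : h 0 = RtoC 0).
  { rewrite <- Hg0. symmetry. apply (agree_on_open_at_left g h a); auto.
    - apply Hc. lra.
    - apply continuous_exp_comb. }
  assert (Hha : h a = RtoC 0).
  { rewrite <- Hga. symmetry. apply (agree_on_open_at_right g h a); auto.
    - apply Hc. lra.
    - apply continuous_exp_comb. }
  assert (Hcint : cint a g = cint a h).
  { apply (RInt_ext (V:=C_R_CompleteNormedModule)). intros x Hx.
    rewrite Rmin_left, Rmax_right in Hx by lra. auto. }
  rewrite Hcint.
  apply (cint_bounds a nu d1 w h (exp_comb k 0 (k * c1) (- k * c2))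
           (exp_comb k 0 (k * (k * c1)) (- k * (- k * c2)))); auto using l1norm_pos_slit_plane;
    intros; first [apply is_derive_exp_comb | apply exp_comb_ode; assumption].
Qed.

(** * The symbol [omega^2] on [S] *)

Lemma IZR_sq_ge_1 (z : Z) : z <> 0%Z -> 1 <= IZR z ^ 2.
Proof.
  intros H. destruct (Z.lt_total z 0) as [h | [h | h]]; [| contradiction |].
  - assert (IZR z <= -1) by (apply IZR_le; lia). nra.
  - assert (1 <= IZR z) by (apply IZR_le; lia). nra.
Qed.

Lemma zeta_sq_ge_1 z1 z2 : (z1, z2) <> (0%Z, 0%Z) -> 1 <= zeta_sq z1 z2.
Proof.
  intros H. unfold zeta_sq.
  pose proof (pow2_ge_0 (IZR z1)). pose proof (pow2_ge_0 (IZR z2)).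
  destruct (Z.eq_dec z1 0) as [-> | h1].
  - destruct (Z.eq_dec z2 0) as [-> | h2]; [contradiction |].
    pose proof (IZR_sq_ge_1 _ h2). lra.
  - pose proof (IZR_sq_ge_1 _ h1). lra.
Qed.

Lemma jzeta_sq_bounds z1 z2 : 1 <= zeta_sq z1 z2 ->
  1 + zeta_sq z1 z2 <= jzeta z1 z2 ^ 2 <= 4 * zeta_sq z1 z2.
Proof.
  intros Hn. unfold jzeta.
  pose proof (sqrt_sqrt (zeta_sq z1 z2) ltac:(lra)).
  assert (1 <= sqrt (zeta_sq z1 z2)) by (rewrite <- sqrt_1; apply sqrt_le_1_alt; lra).
  split; nra.
Qed.

(* [p] is the real part of [omega^2] for [lam = - d2 - mu1 + i mu2] and [n = |zeta|^2]. *)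
Lemma omega2_re_bounds (nu d1 d2 mu1 mu2 n : R) :
  0 < nu -> 0 < d1 -> d2 < nu / 2 -> 1 <= n -> Rabs mu2 >= mu1 / d1 ->
  let p := - d2 - mu1 + nu * n in
  (p < 0 -> - p <= d1 * Rabs mu2) /\ (mu2 = 0 -> 0 < p) /\
  Rabs mu1 <= (1 + d1) * (Rabs p + Rabs mu2) /\ nu * n <= (4 + 4 * d1) * (Rabs p + Rabs mu2).
Proof.
  intros hnu hd1 hd2 hn Hmu p.
  assert (Hm : mu1 <= d1 * Rabs mu2).
  { apply Rge_le in Hmu. apply (Rmult_le_compat_l d1) in Hmu; [| lra].
    replace (d1 * (mu1 / d1)) with mu1 in Hmu by (field; lra). lra. }
  pose proof (Rle_abs p). pose proof (Rle_abs (- p)). rewrite Rabs_Ropp in *.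
  pose proof (Rabs_pos mu2).
  assert (nu <= nu * n) by nra.
  assert (0 <= d1 * Rabs mu2) by nra.
  unfold p in *.
  split; [| split; [| split]].
  - intros; lra.
  - intros h0. rewrite h0, Rabs_R0 in Hm. lra.
  - destruct (Rle_dec mu1 0).
    + rewrite Rabs_left1 by lra. nra.
    + rewrite Rabs_right by lra. nra.
  - destruct (Rle_dec mu1 (nu * n / 4)); nra.
Qed.

Lemma omega2_bounds (nu d1 d2 : R) : 0 < nu -> 0 < d1 -> d2 < nu / 2 ->
  exists K, 0 < K /\ forall lam z1 z2, in_S d1 d2 lam -> (z1, z2) <> (0%Z, 0%Z) ->
    let w := omega2 nu lam z1 z2 in
    in_sector d1 w /\ slit_plane w /\
    jomega2 lam z1 z2 <= K * l1norm w /\ l1norm w + nu <= K * jomega2 lam z1 z2.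
Proof.
  intros hnu hd1 hd2.
  set (Ku := (2 + d1) + (Rabs d2 + 4) * (4 + 4 * d1) / nu).
  assert (hKu : 0 < Ku).
  { pose proof (Rabs_pos d2).
    assert (0 < (Rabs d2 + 4) * (4 + 4 * d1) / nu) by (apply Rdiv_lt_0_compat; nra).
    unfold Ku. lra. }
  exists (Rmax Ku (Rmax 2 nu)). split; [apply (Rlt_le_trans _ Ku); [lra | apply Rmax_l] |].
  intros lam z1 z2 [mu1 [mu2 [-> Hmu]]] Hz w.
  set (n := zeta_sq z1 z2).
  assert (hn : 1 <= n) by (apply zeta_sq_ge_1; auto).
  destruct (omega2_re_bounds nu d1 d2 mu1 mu2 n hnu hd1 hd2 hn Hmu) as [Hsec [Hreal [Hmu1 Hn]]].
  assert (Ew : w = ((- d2 - mu1 + nu * n)%R, mu2)).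
  { unfold w, omega2, n. apply C_ext; simpl; ring. }
  unfold in_sector, l1norm, jomega2. rewrite Ew. cbn [fst snd].
  set (P := Rabs (- d2 - mu1 + nu * n) + Rabs mu2) in *.
  pose proof (Cmod_le_l1norm ((- d2 - mu1)%R, mu2)) as HCup.
  pose proof (l1norm_le_Cmod ((- d2 - mu1)%R, mu2)) as HClow.
  unfold l1norm in HCup, HClow. cbn [fst snd] in HCup, HClow.
  destruct (jzeta_sq_bounds z1 z2 hn) as [Hj1 Hj2]. fold n in Hj1, Hj2.
  pose proof (Rabs_pos d2). pose proof (Rabs_pos mu1). pose proof (Rabs_pos mu2).
  pose proof (Rabs_pos (- d2 - mu1 + nu * n)).
  pose proof (Rabs_pos (- d2 - mu1)).
  assert (0 <= P) by (unfold P; lra).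
  split; [exact Hsec | split; [exact Hreal | split]].
  - apply (Rle_trans _ (Ku * P)); [| apply Rmult_le_compat_r; [lra | apply Rmax_l]].
    assert (Rabs (- d2 - mu1) <= Rabs d2 + Rabs mu1).
    { replace (- d2 - mu1) with (- d2 + - mu1) by ring.
      rewrite <- (Rabs_Ropp d2), <- (Rabs_Ropp mu1). apply Rabs_triang. }
    assert (Hn' : n <= (4 + 4 * d1) * P / nu).
    { apply (Rmult_le_reg_l nu); [lra |].
      replace (nu * ((4 + 4 * d1) * P / nu)) with ((4 + 4 * d1) * P) by (field; lra). lra. }
    assert ((Rabs d2 + 4) * n <= (Rabs d2 + 4) * ((4 + 4 * d1) * P / nu))
      by (apply Rmult_le_compat_l; lra).
    replace (Ku * P) with ((2 + d1) * P + (Rabs d2 + 4) * ((4 + 4 * d1) * P / nu))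
      by (unfold Ku; field; lra).
    assert (Rabs d2 <= Rabs d2 * n) by nra.
    unfold P in *. lra.
  - apply (Rle_trans _ (Rmax 2 nu * (Cmod ((- d2 - mu1)%R, mu2) + jzeta z1 z2 ^ 2))).
    + assert (Rabs (- d2 - mu1 + nu * n) <= Rabs (- d2 - mu1) + nu * n).
      { rewrite <- (Rabs_right (nu * n)) at 2 by nra. apply Rabs_triang. }
      pose proof (Cmod_ge_0 ((- d2 - mu1)%R, mu2)).
      assert (2 * Cmod ((- d2 - mu1)%R, mu2) <= Rmax 2 nu * Cmod ((- d2 - mu1)%R, mu2))
        by (apply Rmult_le_compat_r; [lra | apply Rmax_l]).
      assert (nu * jzeta z1 z2 ^ 2 <= Rmax 2 nu * jzeta z1 z2 ^ 2)
        by (apply Rmult_le_compat_r; [lra | apply Rmax_r]).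
      unfold P in *. nra.
    + apply Rmult_le_compat_r; [pose proof (Cmod_ge_0 ((- d2 - mu1)%R, mu2)); nra | apply Rmax_r].
Qed.

Theorem lemma10 :
  forall (a nu d1 d2 : R),
    0 < a -> 0 < nu -> 0 < d1 ->
    d2 < Rmin (nu * PI ^ 2 / (2 * a ^ 2)) (nu / 2) ->
    exists C1 C2 : R, 0 < C1 /\ 0 < C2 /\
      forall (lam : C) (z1 z2 : Z),
        in_S d1 d2 lam -> (z1, z2) <> (0%Z, 0%Z) ->
        (exists g, dirichlet_sol a nu (omega2 nu lam z1 z2) g) /\
        (forall g, dirichlet_sol a nu (omega2 nu lam z1 z2) g ->
           C1 / jomega2 lam z1 z2 <= Cmod (cint a g) <= C2 / jomega2 lam z1 z2).
Proof.
  intros a nu d1 d2 ha hnu hd1 hd2.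
  destruct (omega2_bounds nu d1 d2 hnu hd1 (Rlt_le_trans _ _ _ hd2 (Rmin_r _ _)))
    as [K [hK HK]].
  set (M := Rmax (3 * a ^ 2 / 16 * (1 + d1)) 2).
  assert (hM : 0 < M) by (apply (Rlt_le_trans _ 2); [lra | apply Rmax_r]).
  exists (a ^ 3 / 12 / (2 * M * K)), (2 * a * (1 + d1) * K).
  split; [apply Rdiv_lt_0_compat; [apply Rdiv_lt_0_compat; [apply pow_lt |] |]; nra |].
  split; [apply Rmult_lt_0_compat; nra |].
  intros lam z1 z2 Hlam Hz.
  destruct (HK lam z1 z2 Hlam Hz) as [Hsec [Hslit [HJup HJlow]]].
  split; [apply dirichlet_sol_exists; assumption |].
  intros g Hg.
  destruct (dirichlet_sol_cint_bounds a nu d1 _ g ha hnu hd1 Hsec Hslit Hg) as [Hup Hlow].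
  pose proof (l1norm_pos_slit_plane _ Hslit) as HP.
  assert (HJ : 0 < jomega2 lam z1 z2) by nra.
  split.
  - apply (lower_bound_transfer _ _ (l1norm (omega2 nu lam z1 z2) + nu));
      auto using Cmod_ge_0; lra.
  - apply (upper_bound_transfer _ _ (l1norm (omega2 nu lam z1 z2))); auto. nra.
Qed.
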